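(* Let $T$ be a decomposition tree of a distance-hereditary graph $G$, and let $v$ be an internal node of $T$ labeled $\otimes$ with left child $v_l$ and right child $v_r$, such that property (P) holds at $v_l$ and at $v_r$. Then $\hat{min}(v)=\hat{min}(v_l)+\hat{min}(v_r)$.
   Context: All graphs are finite, simple, undirected. For a graph $H$ and $S\subseteq V(H)$, $N_H[S]$ is $S$ together with all vertices adjacent to a vertex of $S$, and $H[S]$ is the induced subgraph. Graphs carry a ''twin set'': a single-vertex graph on $x$ has twin set $\{x\}$. For vertex-disjoint graphs $G_l,G_r$ with twin sets $TS(G_l),TS(G_r)$: the true twin operation $G_l\otimes G_r$ has vertex set $V(G_l)\cup V(G_r)$, edge set $E(G_l)\cup E(G_r)\cup\{uw: u\in TS(G_l), w\in TS(G_r)\}$ and twin set $TS(G_l)\cup TS(G_r)$; the false twin operation $G_l\odot G_r$ has vertex set $V(G_l)\cup V(G_r)$, edge set $E(G_l)\cup E(G_r)$, twin set $TS(G_l)\cup TS(G_r)$; the attachment operation $G_l\oplus G_r$ has the same vertex and edge sets as $G_l\otimes G_r$ and twin set $TS(G_l)$. A decomposition tree $T$ of $G$ is a rooted binary tree whose leaves are in bijection with $V(G)$, each internal node having a left and a right child and a label in $\{\otimes,\odot,\oplus\}$; for each node $v$ define $\hat G(v)$ and $\hat{TS}(v)$ recursively: for a leaf $x$, the single-vertex graph on $x$ with twin set $\{x\}$; for an internal node $v$ with label $\circ$ and children $v_l,v_r$, $\hat G(v)=\hat G(v_l)\circ\hat G(v_r)$ with the corresponding twin set; one requires $\hat G(\text{root})=G$.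 Then $\hat G(v)$ is the subgraph of $G$ induced by the set $\hat V(v)$ of leaves below $v$. For a node $u$ and $0\le k\le|\hat{TS}(u)|$, call $S\subseteq\hat V(u)$ $k$-feasible if $\hat V(u)\setminus\hat{TS}(u)\subseteq N_{\hat G(u)}[S]$ and there is $X\subseteq S\cap\hat{TS}(u)$ with $|X|=k$ such that $\hat G(u)[S\setminus X]$ has a perfect matching. $\hat\gamma_k(u)$ is the minimum size of a $k$-feasible set. $\hat{min}(u)=\min\{\hat\gamma_k(u):0\le k\le|\hat{TS}(u)|\}$, and $\hat\alpha(u)$, $\hat\beta(u)$ are the smallest and the largest $k$ with $\hat\gamma_k(u)=\hat{min}(u)$. Property (P) holds at $u$ if for every $0\le k\le|\hat{TS}(u)|$: $\hat\gamma_k(u)=\hat{min}(u)+\hat\alpha(u)-k$ when $k\le\hat\alpha(u)$; $\hat\gamma_k(u)=\hat{min}(u)+k-\hat\beta(u)$ when $k\ge\hat\beta(u)$; $\hat\gamma_k(u)=\hat{min}(u)$ when $\hat\alpha(u)<k<\hat\beta(u)$ and $k-\hat\alpha(u)$ is even; and $\hat\gamma_k(u)=\hat{min}(u)+1$ otherwise. *)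

From mathcomp Require Import all_boot.
Set Implicit Arguments. Unset Strict Implicit. Unset Printing Implicit Defensive.

(* Labels of internal nodes: true twin (otimes), false twin (odot), attachment (oplus). *)
Inductive dlabel := LTrue | LFalse | LAttach.

Definition dlabel_eqb (a b : dlabel) : bool :=
  match a, b with
  | LTrue, LTrue | LFalse, LFalse | LAttach, LAttach => true
  | _, _ => false end.

Inductive dtree (V : Type) :=
| DLeaf of V
| DNode of dlabel & dtree V & dtree V.
Arguments DLeaf {V}.
Arguments DNode {V}.

Section Tree.
Variable V : finType.

Fixpoint leaves (t : dtree V) : seq V :=
  match t with DLeaf x => [:: x] | DNode _ l r => leaves l ++ leaves r end.

Definition hV (t : dtree V) : {set V} := [set x | x \in leaves t].

Fixpoint hTS (t : dtree V) : {set V} :=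
  match t with
  | DLeaf x => [set x]
  | DNode LTrue l r => hTS l :|: hTS r
  | DNode LFalse l r => hTS l :|: hTS r
  | DNode LAttach l r => hTS l
  end.

Fixpoint hE (t : dtree V) : rel V :=
  match t with
  | DLeaf _ => fun _ _ => false
  | DNode lab l r => fun x y =>
      [|| hE l x y, hE r x y |
        (~~ dlabel_eqb lab LFalse) &&
        (((x \in hTS l) && (y \in hTS r)) || ((y \in hTS l) && (x \in hTS r)))]
  end.

(* s is a node of t (the subtree rooted at that node) *)
Fixpoint subtree (s t : dtree V) : Prop :=
  s = t \/ match t with DLeaf _ => False | DNode _ l r => subtree s l \/ subtree s r end.

Definition decomp_tree (G : rel V) (t : dtree V) : Prop :=
  uniq (leaves t) /\ (forall x : V, x \in leaves t) /\ (forall x y : V, G x y = hE t x y).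

(* distance-hereditary: in every induced subgraph in which x,y are connected,
   the distance between x and y equals their distance in G. *)
Definition walk_le (e : rel V) (x y : V) (n : nat) : Prop :=
  exists p : seq V, size p <= n /\ path e x p /\ last x p = y.

Definition distance_hereditary (G : rel V) : Prop :=
  forall (S : {set V}) (x y : V), x \in S -> y \in S ->
    let GS := fun a b => G a b && (a \in S) && (b \in S) in
    (exists n, walk_le GS x y n) ->
    forall n, walk_le G x y n -> walk_le GS x y n.

(* e has a perfect matching on vertex set W: a set M of edges (2-sets {x,y}
   with e x y, inside W) covering each vertex of W exactly once. *)
Definition has_pm (e : rel V) (W : {set V}) : bool :=
  [exists M : {set {set V}},
    [forall m in M, (m \subset W) &&
       [exists x, exists y, [&& x != y, e x y & m == [set x; y]]]] &&
    [forall x in W, #|[set m in M | x \in m]| == 1]].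

Definition cnbh (u : dtree V) (S : {set V}) : {set V} :=
  [set x in hV u | (x \in S) || [exists s in S, hE u x s]].

Definition kfeasible (u : dtree V) (k : nat) (S : {set V}) : bool :=
  [&& S \subset hV u,
      (hV u :\: hTS u) \subset cnbh u S &
      [exists X : {set V}, [&& X \subset S :&: hTS u, #|X| == k &
                               has_pm (hE u) (S :\: X)]]].

(* \hat gamma_k(u): minimum size of a k-feasible set (the default #|V|.+1 is
   never used for 0 <= k <= |TS(u)|, where k-feasible sets exist). *)
Definition hgamma (u : dtree V) (k : nat) : nat :=
  \big[minn/#|V|.+1]_(S : {set V} | kfeasible u k S) #|S|.

Definition hmin (u : dtree V) : nat :=
  \big[minn/#|V|.+1]_(k < #|hTS u|.+1) hgamma u k.

Definition halpha (u : dtree V) : nat :=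
  \big[minn/#|hTS u|]_(k < #|hTS u|.+1 | hgamma u k == hmin u) (k : nat).

Definition hbeta (u : dtree V) : nat :=
  \max_(k < #|hTS u|.+1 | hgamma u k == hmin u) (k : nat).

Definition propP (u : dtree V) : Prop :=
  forall k, k <= #|hTS u| ->
    (k <= halpha u -> hgamma u k = hmin u + halpha u - k) /\
    (hbeta u <= k -> hgamma u k = hmin u + k - hbeta u) /\
    (halpha u < k < hbeta u -> ~~ odd (k - halpha u) -> hgamma u k = hmin u) /\
    (halpha u < k < hbeta u -> odd (k - halpha u) -> hgamma u k = (hmin u).+1).

End Tree.

From mathcomp Require Import all_boot all_order.
Set Implicit Arguments. Unset Strict Implicit. Unset Printing Implicit Defensive.
Import Order.TTheory.

(* At a true-twin node u = l (x) r, the graph of u is the disjoint union of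
   the graphs of l and r plus all edges between TS(l) and TS(r), and TS(u) is
   the union of TS(l) and TS(r).  So feasible sets of l and of r unite to a
   feasible set of u.  Conversely a k-feasible set S of u splits along V(l) and V(r):
   the matching edges of S inside V(l) leave unmatched only vertices of X or
   vertices matched across the cut, which all lie in TS(l), and a vertex of
   V(l) outside TS(l) has no neighbour across the cut.  Hence min(u) is
   min(l) + min(r) for disjoint l and r.  The minima are genuinely attained, never the default value,
   because the vertices covered by a maximum matching form a 0-feasible set. *)

Section Matchings.
Variable V : finType.
Implicit Types (e : rel V) (m W D : {set V}) (M : {set {set V}}).

Lemma cardsU_disjoint (A B : {set V}) :
  [disjoint A & B] -> #|A :|: B| = #|A| + #|B|.
Proof. by move=> dAB; apply/eqP; rewrite (leq_card_setU A B). Qed.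

Definition is_edge e m := [exists x, exists y, [&& x != y, e x y & m == [set x; y]]].

Definition matching e M := trivIset M && [forall m in M, is_edge e m].

Lemma is_edgeP e m x : symmetric e -> is_edge e m -> x \in m ->
  exists2 y, e x y & m = [set x; y].
Proof.
move=> esym /existsP[p /existsP[q /and3P[_ epq /eqP->]]].
rewrite !inE => /orP[]/eqP->; first by exists q.
by exists p; rewrite 1?esym // setUC.
Qed.

Lemma has_pmP e W :
  reflect (exists2 M, matching e M & cover M = W) (has_pm e W).
Proof.
apply: (iffP existsP) => [[M /andP[/forall_inP M_edges /forall_inP M_cov]]|].
  have MW m : m \in M -> m \subset W by move=> /M_edges/andP[].
  exists M; last first.
    apply/eqP; rewrite eqEsubset; apply/andP; split; first exact/bigcupsP.
    apply/subsetP => x /M_cov/cards1P[m /setP/(_ m)].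
    by rewrite !inE eqxx => /andP[mM xm]; apply/bigcupP; exists m.
  apply/andP; split; last by apply/forall_inP => m /M_edges/andP[].
  apply/trivIsetP => A B AM BM neqAB; apply/pred0P => x /=.
  apply/negbTE/andP => -[xA xB].
  have /M_cov/cards1P[m Mx] : x \in W by apply: subsetP (MW _ AM) _ xA.
  have inMx Y : Y \in M -> x \in Y -> Y = m.
    by move=> YM xY; apply/set1P; rewrite -Mx inE YM xY.
  by rewrite (inMx A AM xA) (inMx B BM xB) eqxx in neqAB.
move=> [M /andP[trivM /forall_inP M_edges] <-]; exists M; apply/andP; split.
  by apply/forall_inP => m mM; rewrite bigcup_sup //; apply: M_edges.
apply/forall_inP => x xM; apply/cards1P; exists (pblock M x).
apply/setP => m; rewrite !inE; apply/andP/eqP => [[mM xm]|->].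
  by rewrite (def_pblock trivM mM xm).
by rewrite pblock_mem // mem_pblock.
Qed.

Lemma matching_mono e e' M : subrel e e' -> matching e M -> matching e' M.
Proof.
move=> ee' /andP[trivM /forall_inP M_edges]; rewrite /matching trivM.
apply/forall_inP => m /M_edges.
case/existsP=> x /existsP[y /and3P[xy exy mxy]].
by apply/existsP; exists x; apply/existsP; exists y; rewrite xy ee'.
Qed.

Lemma eq_has_pm e e' W : e =2 e' -> has_pm e W = has_pm e' W.
Proof.
move=> ee'; apply/has_pmP/has_pmP => -[M mM <-]; exists M => //.
  by apply: matching_mono mM => x y; rewrite ee'.
by apply: matching_mono mM => x y; rewrite ee'.
Qed.

Lemma matching_setI e e' M D : {in D &, subrel e e'} ->
  matching e M -> matching e' (M ::&: D).
Proof.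
move=> ee' /andP[trivM /forall_inP M_edges]; rewrite /matching trivIsetI //=.
apply/forall_inP => m /setIdP[/M_edges edge_m mD].
case/existsP: edge_m => x /existsP[y /and3P[xy exy /eqP mxy]].
apply/existsP; exists x; apply/existsP; exists y; rewrite xy mxy eqxx andbT.
by apply: ee' exy; apply: (subsetP mD); rewrite mxy !inE eqxx ?orbT.
Qed.

Lemma matchingU e M1 M2 : [disjoint cover M1 & cover M2] ->
  matching e M1 -> matching e M2 -> matching e (M1 :|: M2).
Proof.
move=> dM /andP[triv1 /forall_inP edges1] /andP[triv2 /forall_inP edges2].
rewrite /matching trivIsetU //=.
by apply/forall_inP => m /setUP[/edges1|/edges2].
Qed.

Lemma matchingU2 e M x y : x != y -> e x y ->
  x \notin cover M -> y \notin cover M -> matching e M ->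
  matching e ([set x; y] |: M).
Proof.
move=> xy exy xM yM mM; apply: matchingU => //.
  rewrite cover1 disjoints_subset; apply/subsetP => z.
  by rewrite !inE => /orP[]/eqP->.
rewrite /matching trivIset1 /=; apply/forall_inP => m; rewrite inE => /eqP->.
by apply/existsP; exists x; apply/existsP; exists y; rewrite xy exy eqxx.
Qed.

Lemma cover_matching e M D : (forall x y, e x y -> (x \in D) && (y \in D)) ->
  matching e M -> cover M \subset D.
Proof.
move=> eD /andP[_ /forall_inP M_edges]; apply/bigcupsP => m /M_edges.
case/existsP=> x /existsP[y /and3P[_ /eD/andP[xD yD] /eqP->]].
by apply/subsetP => z /set2P[]->.
Qed.

Lemma max_matching_cover e M x y :
  matching e M -> (forall M', matching e M' -> #|M'| <= #|M|) ->
  x != y -> e x y -> x \notin cover M -> y \in cover M.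
Proof.
move=> mM maxM xy exy xM; apply: contraT => yM.
have /maxM := matchingU2 xy exy xM yM mM.
rewrite cardsU1; case: (boolP ([set x; y] \in M)) => [xyM _|_]; last by rewrite ltnn.
by move: xM; rewrite (subsetP (bigcup_sup _ xyM)) // !inE eqxx.
Qed.

End Matchings.

Section Trees.
Variable V : finType.
Implicit Types (t l r : dtree V) (S : {set V}).

Lemma hV_node lab l r : hV (DNode lab l r) = hV l :|: hV r.
Proof. by apply/setP => x; rewrite !inE mem_cat. Qed.

Lemma hTS_sub t : hTS t \subset hV t.
Proof.
elim: t => [x|lab l IHl r IHr]; first by rewrite sub1set inE /= inE.
rewrite hV_node; case: lab => /=; rewrite ?setUSS //.
exact: subset_trans IHl (subsetUl _ _).
Qed.

Lemma hE_sym t : symmetric (hE t).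
Proof.
elim: t => [//|lab l IHl r IHr] x y /=.
by rewrite IHl IHr [X in _ && X]orbC.
Qed.

Lemma hE_hV t x y : hE t x y -> (x \in hV t) && (y \in hV t).
Proof.
elim: t => [//|lab l IHl r IHr] /=.
have /subsetP TSl := hTS_sub l; have /subsetP TSr := hTS_sub r.
rewrite hV_node !in_setU => /or3P[/IHl/andP[-> ->] //|/IHr/andP[-> ->]|].
  by rewrite !orbT.
by case/andP=> _ /orP[]/andP[/TSl-> /TSr->]; rewrite orbT.
Qed.

Lemma hTS_neq0 t : hTS t != set0.
Proof.
elim: t => [x|[] l IHl r _] /=; first by apply/set0Pn; exists x; rewrite inE.
all: by case/set0Pn: IHl => x xl; apply/set0Pn; exists x; rewrite ?inE xl.
Qed.

Lemma hE_nonisolated t w : w \in hV t :\: hTS t -> exists2 y, y != w & hE t w y.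
Proof.
elim: t => [x|lab l IHl r IHr]; first by rewrite /hV /= !inE andNb.
rewrite hV_node in_setD in_setU => /andP[wTS /orP[wl|wr]].
  have [|y yw ewy] := IHl; last by exists y; rewrite //= ewy.
  rewrite in_setD wl andbT; apply: contra wTS.
  by case: lab => /= wTSl; rewrite ?in_setU ?wTSl.
have [wTSr|wTSr] := boolP (w \in hTS r); last first.
  have [|y yw ewy] := IHr; last by exists y; rewrite //= ewy orbT.
  by rewrite in_setD wr wTSr.
case: lab wTS => /=; rewrite ?in_setU ?wTSr ?orbT // => wTSl.
have /set0Pn[z zl] := hTS_neq0 l.
by exists z; [apply: contraNneq wTSl => <- | rewrite zl !orbT].
Qed.

End Trees.

Section Feasibility.
Variable V : finType.
Implicit Types (t : dtree V) (S : {set V}).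

Lemma kfeasibleP t k S : reflect
  [/\ S \subset hV t, hV t :\: hTS t \subset cnbh t S &
      exists (X : {set V}) M, [/\ X \subset S :&: hTS t, #|X| = k,
                                  matching (hE t) M & cover M = S :\: X]]
  (kfeasible t k S).
Proof.
apply: (iffP and3P) => -[SV dom ex]; split=> //.
  case/existsP: ex => X /and3P[XS /eqP cX /has_pmP[M mM cM]].
  by exists X, M.
case: ex => X [M [XS cX mM cM]]; apply/existsP; exists X.
by rewrite XS cX eqxx /=; apply/has_pmP; exists M.
Qed.

Lemma in_cnbh t S x :
  (x \in cnbh t S) = (x \in hV t) && ((x \in S) || [exists s in S, hE t x s]).
Proof. exact: in_set. Qed.

Lemma eq_kfeasible t t' : hV t = hV t' -> hTS t = hTS t' -> hE t =2 hE t' ->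
  kfeasible t =2 kfeasible t'.
Proof.
move=> eV eTS eE k S; rewrite /kfeasible; have -> : cnbh t S = cnbh t' S.
  by apply/setP => x; rewrite !in_cnbh eV; under eq_existsb => s do rewrite eE.
by rewrite eV eTS; under eq_existsb => X do rewrite (eq_has_pm _ eE).
Qed.

Lemma subset_cnbh t t' S S' : hV t \subset hV t' -> S \subset S' ->
  subrel (hE t) (hE t') -> cnbh t S \subset cnbh t' S'.
Proof.
move=> tt' SS' ee'; apply/subsetP => x; rewrite !in_cnbh => /andP[/(subsetP tt')-> /=].
case/orP=> [/(subsetP SS')->//|/exists_inP[s sS exs]].
by apply/orP; right; apply/exists_inP; exists s; [apply: (subsetP SS')|apply: ee'].
Qed.

Lemma kfeasible0_exists t : exists S, kfeasible t 0 S.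
Proof.
have matching0 : matching (hE t) set0.
  rewrite /matching /trivIset /cover !big_set0 cards0 /=.
  by apply/forall_inP => m; rewrite inE.
case: (arg_maxnP (fun M : {set {set V}} => #|M|) matching0) => M mM maxM.
exists (cover M); apply/kfeasibleP; split.
- by apply: cover_matching mM; apply: hE_hV.
- apply/subsetP => w wVTS; have /setDP[wV _] := wVTS; rewrite in_cnbh wV /=.
  have [//|wM] := boolP (w \in cover M).
  have [y yw ewy] := hE_nonisolated wVTS.
  apply/exists_inP; exists y => //.
  by apply: max_matching_cover mM maxM _ ewy wM; rewrite eq_sym.
- by exists set0, M; rewrite sub0set cards0 setD0.
Qed.

Lemma kfeasible_le t k S : kfeasible t k S -> k <= #|hTS t|.
Proof.
case/and3P=> _ _ /existsP[X /and3P[XS /eqP <- _]].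
exact/subset_leq_card/(subset_trans XS)/subsetIr.
Qed.

Definition feasible t S := [exists k : 'I_#|hTS t|.+1, kfeasible t k S].

Lemma feasibleP t S : reflect (exists k, kfeasible t k S) (feasible t S).
Proof.
apply: (iffP existsP) => [[k]|[k Fk]]; first by exists k.
by have kle := kfeasible_le Fk; exists (Ordinal (kle : k < #|hTS t|.+1)).
Qed.

Lemma hminE t : hmin t = \big[minn/#|V|.+1]_(S | feasible t S) #|S|.
Proof.
rewrite /hmin /hgamma -!minEnat; apply/eqP; rewrite eqn_leq -!leEnat; apply/andP; split.
  apply/bigmin_geP; split => [|S /feasibleP[k Fk]]; first exact: bigmin_le_id.
  have kle := kfeasible_le Fk.
  apply: le_trans (bigmin_le _ (Ordinal (kle : k < #|hTS t|.+1)) _) _.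
  exact: bigmin_le_cond.
apply/bigmin_geP; split => [|k _]; first exact: bigmin_le_id.
apply/bigmin_geP; split => [|S Fk]; first exact: bigmin_le_id.
by apply: bigmin_le_cond; apply/feasibleP; exists k.
Qed.

Lemma hmin_le t k S : kfeasible t k S -> hmin t <= #|S|.
Proof.
move=> Fk; rewrite hminE -minEnat -leEnat; apply: bigmin_le_cond.
by apply/feasibleP; exists k.
Qed.

Lemma hmin_attained t : exists k S, kfeasible t k S /\ #|S| = hmin t.
Proof.
have [S0 F0] := kfeasible0_exists t.
have F0' : feasible t S0 by apply/feasibleP; exists 0.
rewrite hminE -minEnat.
have [S /feasibleP[k Fk] ->] :=
  eq_bigmin S0 _ (fun S => #|S|) F0' (fun S _ => leqW (max_card S)).
by exists k, S.
Qed.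

Lemma hmin_ge t c : (forall k S, kfeasible t k S -> c <= #|S|) -> c <= hmin t.
Proof.
move=> cS; have [S0 F0] := kfeasible0_exists t.
rewrite hminE -minEnat -leEnat; apply/bigmin_geP; split => [|S /feasibleP[k /cS //]].
exact: leq_trans (cS _ _ F0) (leqW (max_card _)).
Qed.

End Feasibility.

Section TrueTwin.
Variables (V : finType) (l r : dtree V).
Hypothesis lr_disj : [disjoint hV l & hV r].
Local Notation u := (DNode LTrue l r).

Lemma hE_twin_l x y : x \in hV l -> y \in hV l -> hE u x y = hE l x y.
Proof.
move=> xl yl; have notr z : z \in hV l -> z \in hTS r = false.
  move=> zl; apply: contraTF zl => /(subsetP (hTS_sub r)) zr.
  by rewrite (disjointFl lr_disj zr).
have Nrxy : ~~ hE r x y.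
  by apply: contraTN xl => /hE_hV/andP[xr _]; rewrite (disjointFl lr_disj xr).
by rewrite /= (negbTE Nrxy) !notr // !andbF !orbF.
Qed.

Lemma hE_twin_cross x y : x \in hV l -> y \in hV r -> hE u x y -> x \in hTS l.
Proof.
move=> xl yr /or3P[/hE_hV/andP[_ yl]|/hE_hV/andP[xr _]|/orP[/andP[]//|/andP[yl _]]].
- by rewrite (disjointFr lr_disj yl) in yr.
- by rewrite (disjointFr lr_disj xl) in xr.
- by rewrite (disjointFr lr_disj (subsetP (hTS_sub l) _ yl)) in yr.
Qed.

Lemma is_edge_twin_cross m x : is_edge (hE u) m -> x \in m -> x \in hV l ->
  ~~ (m \subset hV l) -> x \in hTS l.
Proof.
move=> em xm xl mNl; have [y exy mxy] := is_edgeP (@hE_sym _ u) em xm.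
have /andP[_] := hE_hV exy; rewrite hV_node in_setU => /orP[yl|yr].
  by move: mNl; rewrite mxy subUset !sub1set xl yl.
exact: hE_twin_cross xl yr exy.
Qed.

Lemma kfeasible_twinU a b Sl Sr : kfeasible l a Sl -> kfeasible r b Sr ->
  kfeasible u (a + b) (Sl :|: Sr).
Proof.
move=> /kfeasibleP[SlV doml [Xl [Ml [XlS <- mMl cMl]]]].
move=> /kfeasibleP[SrV domr [Xr [Mr [XrS <- mMr cMr]]]].
have sub_l : subrel (hE l) (hE u) by move=> x y /= ->.
have sub_r : subrel (hE r) (hE u) by move=> x y /= ->; rewrite orbT.
have dSlSr (A B : {set V}) : A \subset Sl -> B \subset Sr -> [disjoint A & B].
  move=> ASl BSr; apply: (disjointW _ _ lr_disj).
    exact: subset_trans ASl SlV.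
  exact: subset_trans BSr SrV.
have XlSl : Xl \subset Sl by apply: subset_trans XlS (subsetIl _ _).
have XrSr : Xr \subset Sr by apply: subset_trans XrS (subsetIl _ _).
apply/kfeasibleP; split.
- by rewrite hV_node setUSS.
- apply/subsetP => w; rewrite hV_node /= !in_setD !in_setU negb_or.
  case/andP=> /andP[wTSl wTSr] /orP[wl|wr].
    apply: subsetP (subset_cnbh _ (subsetUl _ _) sub_l) _ _.
      by rewrite hV_node subsetUl.
    by apply: (subsetP doml); rewrite in_setD wTSl.
  apply: subsetP (subset_cnbh _ (subsetUr _ _) sub_r) _ _.
    by rewrite hV_node subsetUr.
  by apply: (subsetP domr); rewrite in_setD wTSr.
- exists (Xl :|: Xr), (Ml :|: Mr); split.
  + rewrite subUset; apply/andP; split.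
      by apply: subset_trans XlS _; apply: setISS; apply: subsetUl.
    by apply: subset_trans XrS _; apply: setISS; apply: subsetUr.
  + by rewrite cardsU_disjoint // dSlSr.
  + apply: matchingU; rewrite ?cMl ?cMr ?dSlSr ?subsetDl //.
      exact: matching_mono mMl.
    exact: matching_mono mMr.
  + rewrite /cover bigcup_setU -!/(cover _) cMl cMr setDUl !setDUr.
    rewrite (setDidPl (dSlSr _ _ (subxx _) XrSr)).
    rewrite [Sr :\: Xl](setDidPl _) 1?disjoint_sym ?dSlSr //.
    by rewrite (setIidPl (subsetDl _ _)) (setIidPr (subsetDl _ _)).
Qed.

Lemma kfeasible_twin_restr k S : kfeasible u k S ->
  exists a, kfeasible l a (S :&: hV l).
Proof.
move=> /kfeasibleP[SV dom [X [M [XS _ mM cM]]]].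
pose Ml := M ::&: hV l.
have mMl : matching (hE l) Ml.
  by apply: matching_setI mM => x y xl yl; rewrite (hE_twin_l xl yl).
have cMl : cover Ml \subset S :&: hV l.
  apply: subset_trans (cover_setI M (hV l)) _; apply: setSI.
  by rewrite cM subsetDl.
exists #|S :&: hV l :\: cover Ml|; apply/kfeasibleP; split.
- exact: subsetIr.
- apply/subsetP => w /setDP[wl wTSl].
  have wTSr : w \notin hTS r.
    by apply: contraTN wl => /(subsetP (hTS_sub r)) wr; rewrite (disjointFl lr_disj wr).
  have wu : w \in hV u :\: hTS u.
    by rewrite in_setD hV_node in_setU wl /= in_setU negb_or wTSl wTSr.
  move: (subsetP dom w wu); rewrite in_cnbh => /andP[_ /orP[wS|/exists_inP[s sS ews]]].
    by rewrite in_cnbh wl in_setI wS wl.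
  rewrite in_cnbh wl /=.
  have /andP[_] := hE_hV ews; rewrite hV_node in_setU => /orP[sl|sr].
    by apply/orP; right; apply/exists_inP; exists s; rewrite ?in_setI ?sS // -hE_twin_l.
  by rewrite (hE_twin_cross wl sr ews) in wTSl.
- exists (S :&: hV l :\: cover Ml), Ml; split=> //.
  + rewrite subsetI subsetDl /=; apply/subsetP => x /setDP[/setIP[xS xl] xNMl].
    have [xX|xNX] := boolP (x \in X).
      have /setIP[_] := subsetP XS x xX; rewrite /= in_setU => /orP[//|xr].
      by move: (subsetP (hTS_sub r) _ xr); rewrite (disjointFr lr_disj xl).
    have : x \in cover M by rewrite cM in_setD xNX.
    case/bigcupP=> m Mm xm.
    have mNl : ~~ (m \subset hV l).
      by apply: contra xNMl => ml; apply/bigcupP; exists m; rewrite // inE Mm.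
    have em : is_edge (hE u) m by case/andP: mM => _ /forall_inP; apply.
    exact: is_edge_twin_cross em xm xl mNl.
  + by rewrite setDDr setDv set0U (setIidPr cMl).
Qed.

End TrueTwin.

Lemma kfeasible_twinC (V : finType) (l r : dtree V) :
  kfeasible (DNode LTrue l r) =2 kfeasible (DNode LTrue r l).
Proof.
apply: eq_kfeasible => [|/=|x y /=]; first by rewrite !hV_node setUC.
  by rewrite setUC.
by rewrite orbCA !(andbC (_ \in hTS r)) [in RHS](orbC (_ && _)).
Qed.

Lemma hmin_twin (V : finType) (l r : dtree V) : [disjoint hV l & hV r] ->
  hmin (DNode LTrue l r) = hmin l + hmin r.
Proof.
move=> lr_disj; apply/eqP; rewrite eqn_leq; apply/andP; split.
  have [a [Sl [Fl <-]]] := hmin_attained l; have [b [Sr [Fr <-]]] := hmin_attained r.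
  have [SlV _ _] := kfeasibleP _ _ _ Fl; have [SrV _ _] := kfeasibleP _ _ _ Fr.
  rewrite -cardsU_disjoint; first exact: hmin_le (kfeasible_twinU lr_disj Fl Fr).
  exact: disjointW SlV SrV lr_disj.
apply: hmin_ge => k S FS.
have [a Fa] := kfeasible_twin_restr lr_disj FS.
have rl_disj : [disjoint hV r & hV l] by rewrite disjoint_sym.
have [b Fb] := kfeasible_twin_restr rl_disj (etrans (esym (kfeasible_twinC l r k S)) FS).
have [SV _ _] := kfeasibleP _ _ _ FS; rewrite hV_node in SV.
rewrite -(setIidPl SV) setIUr cardsU_disjoint; last first.
  exact: disjointW (subsetIr _ _) (subsetIr _ _) lr_disj.
exact: leq_add (hmin_le Fa) (hmin_le Fb).
Qed.

Lemma subtree_uniq (V : finType) (s t : dtree V) :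
  subtree s t -> uniq (leaves t) -> uniq (leaves s).
Proof.
elim: t => [x [-> //|[]]|lab l IHl r IHr [-> //|[/IHl IH|/IHr IH]]];
  by rewrite /= cat_uniq => /and3P[ul _ ur]; apply: IH.
Qed.

Lemma disjoint_hV_uniq (V : finType) lab (l r : dtree V) :
  uniq (leaves (DNode lab l r)) -> [disjoint hV l & hV r].
Proof.
rewrite /= cat_uniq => /and3P[_ /hasPn lr _].
by apply/pred0P => x /=; rewrite !inE; apply/negbTE/andP => -[xl /lr]; rewrite xl.
Qed.

Theorem lemma6 (V : finType) (G : rel V)
  (Gsym : symmetric G) (Girr : irreflexive G)
  (Gdh : distance_hereditary G)
  (T : dtree V) (HT : decomp_tree G T)
  (vl vr : dtree V) (Hv : subtree (DNode LTrue vl vr) T)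
  (Pl : propP vl) (Pr : propP vr) :
  hmin (DNode LTrue vl vr) = hmin vl + hmin vr.
Proof.
by apply/hmin_twin/disjoint_hV_uniq/(subtree_uniq Hv); case: HT.
Qed.
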